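(* For all $n \ge 2$, $l(K_n \,\square\, K_2) \le 5n - 4$.
   Context: All graphs are simple and undirected; $K_n$ is the complete graph on $n$ vertices. Letters $x,y$ alternate in a word $w$ if deleting all other letters from $w$ yields $xyxy\ldots$ or $yxyx\ldots$ (of either parity). A word $w$ over $V(G)$ represents $G$ if every vertex occurs in $w$ and for all distinct $x,y$, $xy\in E(G)$ iff $x,y$ alternate in $w$; $l(G)$ is the minimum length of a word representing $G$. The Cartesian product $G\,\square\,H$ has vertex set $V(G)\times V(H)$, with $(u,v)$ adjacent to $(u',v')$ iff either $u=u'$ and $vv'\in E(H)$, or $v=v'$ and $uu'\in E(G)$. *)

(* Graphs are symmetric irreflexive relations on a finType. *)
From mathcomp Require Import all_boot.
Set Implicit Arguments. Unset Strict Implicit. Unset Printing Implicit Defensive.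

Definition Kn (n : nat) : rel 'I_n := fun i j => i != j.

Definition cartprod (T U : finType) (eG : rel T) (eH : rel U) : rel (T * U) :=
  fun p q => ((p.1 == q.1) && eH p.2 q.2) || ((p.2 == q.2) && eG p.1 q.1).

Definition alternate (T : eqType) (w : seq T) (x y : T) : bool :=
  let s := [seq z <- w | (z == x) || (z == y)] in
  (s == [seq (if odd i then y else x) | i <- iota 0 (size s)]) ||
  (s == [seq (if odd i then x else y) | i <- iota 0 (size s)]).

Definition represents (T : finType) (e : rel T) (w : seq T) : Prop :=
  (forall x : T, x \in w) /\
  (forall x y : T, x != y -> (e x y <-> alternate w x y)).

(* The word is
     [k0 k1 | k in m] a0 a1 b0 [k0 | k in m] a0 b1 b0 [k1 k0 | k in m]
   on columns a, b and the remaining n - 2 columns m (rows 0 and 1), of length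
   5(n - 2) + 6 = 5n - 4.  Whether two letters alternate only depends on the
   subword they span, and deleting every column of m except those of the two
   letters yields the same construction with at most two columns in m.
   Relabelling columns injectively preserves alternation, so it suffices to
   check the construction with at most four columns, a finite computation. *)
From mathcomp Require Import all_boot zify.
Set Implicit Arguments. Unset Strict Implicit. Unset Printing Implicit Defensive.

Lemma alternate_filter (T : eqType) (P : pred T) (s : seq T) (x y : T) :
  P x -> P y -> alternate (filter P s) x y = alternate s x y.
Proof.
move=> Px Py; rewrite /alternate -filter_predI.
by rewrite (eq_filter (a2 := fun z => (z == x) || (z == y))) // => z;
  apply/andb_idr => /orP[] /eqP ->.
Qed.

Lemma alternate_map (T U : eqType) (f : T -> U) (s : seq T) (x y : T) :
  {in [:: x, y & s] &, injective f} ->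
  alternate (map f s) (f x) (f y) = alternate s x y.
Proof.
set A := [:: x, y & s] => inj_f.
have [xA yA] : x \in A /\ y \in A by rewrite !inE !eqxx orbT.
rewrite /alternate filter_map size_map /=.
set t := [seq z <- s | (z == x) || (z == y)].
rewrite (eq_in_filter (a2 := fun z => (z == x) || (z == y))) -/t; last first.
  by move=> z sz; rewrite /= !(inj_in_eq inj_f) // !inE sz !orbT.
have tA : all [in A] t.
  by apply/allP => z; rewrite mem_filter !inE => /andP[_ ->]; rewrite !orbT.
have map_pattern u v : [seq if odd i then f u else f v | i <- iota 0 (size t)] =
    map f [seq if odd i then u else v | i <- iota 0 (size t)].
  by rewrite -map_comp; apply: eq_map => i /=; case: odd.
have pattern_in u v : u \in A -> v \in A ->
    all [in A] [seq if odd i then u else v | i <- iota 0 (size t)].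
  by move=> uA vA; apply/allP => z /mapP[i _ ->]; case: odd.
by rewrite !map_pattern !(inj_in_eq (inj_in_map inj_f)) // inE ?pattern_in.
Qed.

Lemma map_index_iota (T : eqType) (s : seq T) :
  uniq s -> map (index^~ s) s = iota 0 (size s).
Proof.
case: s => // x0 s' uniq_s; set s := x0 :: s'.
rewrite -[X in map _ X](mkseq_nth x0 s) /mkseq -map_comp.
by apply: map_id_in => i; rewrite mem_iota add0n => /andP[_ lt_i]; apply: index_uniq.
Qed.

Lemma mem_allpairs_pair (S T : eqType) (s : seq S) (t : seq T) (z : S * T) :
  (z \in [seq (x, y) | x <- s, y <- t]) = (z.1 \in s) && (z.2 \in t).
Proof.
case: z => x y; apply/allpairsP/andP => [[[x' y'] [? ? [-> ->]]] // | [? ?]].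
by exists (x, y).
Qed.

Lemma mem_ord2 (r : 'I_2) : r \in [:: ord0; ord_max].
Proof. by case: r => [[|[|]]] // ?; rewrite !inE -!val_eqE. Qed.

Definition prism_word (T : Type) (a b : T) (m : seq T) : seq (T * 'I_2) :=
  [seq (k, r) | k <- m, r <- [:: ord0; ord_max]] ++
  [:: (a, ord0); (a, ord_max); (b, ord0)] ++
  [seq (k, r) | k <- m, r <- [:: ord0]] ++
  [:: (a, ord0); (b, ord_max); (b, ord0)] ++
  [seq (k, r) | k <- m, r <- [:: ord_max; ord0]].

(* [cartprod] of K_T and K_2 for a mere eqType [T]: the proof relabels columns
   by [nat], which is not a finType. *)
Definition prism_edge (T : eqType) : rel (T * 'I_2) :=
  fun x y => ((x.1 == y.1) && (x.2 != y.2)) || ((x.2 == y.2) && (x.1 != y.1)).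

Lemma size_prism_word (T : Type) (a b : T) (m : seq T) :
  size (prism_word a b m) = 5 * size m + 6.
Proof. rewrite /prism_word !size_cat !size_allpairs /=; lia. Qed.

Lemma mem_prism_word (T : eqType) (a b : T) (m : seq T) (z : T * 'I_2) :
  (z \in prism_word a b m) = (z.1 \in [:: a, b & m]).
Proof.
case: z => i r; move: (mem_ord2 r); rewrite !inE => /orP[] /eqP ->.
all: rewrite /prism_word !mem_cat !mem_allpairs_pair !inE /= !xpair_eqE !eqxx /=.
all: by case: (i == a); case: (i == b); case: (i \in m).
Qed.

Lemma map_prism_word (T U : Type) (f : T -> U) (a b : T) (m : seq T) :
  [seq (f z.1, z.2) | z <- prism_word a b m] = prism_word (f a) (f b) (map f m).
Proof. by rewrite /prism_word !map_cat !map_allpairs !allpairs_mapl. Qed.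

Lemma filter_fst_allpairs (S T : Type) (P : pred S) (s : seq S) (t : seq T) :
  [seq z <- [seq (x, y) | x <- s, y <- t] | P z.1] =
  [seq (x, y) | x <- filter P s, y <- t].
Proof.
elim: s => //= x s IH; rewrite filter_cat IH filter_map.
rewrite (eq_filter (a2 := fun=> P x)) //.
by case: (P x); [rewrite filter_predT | rewrite filter_pred0].
Qed.

Lemma filter_prism_word (T : eqType) (P : pred T) (a b : T) (m : seq T) :
  P a -> P b -> [seq z <- prism_word a b m | P z.1] = prism_word a b (filter P m).
Proof. by move=> Pa Pb; rewrite /prism_word !filter_cat !filter_fst_allpairs /= Pa Pb. Qed.

(* Stated over nat columns so that vm_compute decides it: ordinals built with
   insub do not reduce. *)
Lemma alternate_prism_word_iota (k : nat) (x y : nat * 'I_2) :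
  k <= 2 -> x.1 < k.+2 -> y.1 < k.+2 -> x != y ->
  alternate (prism_word 0 1 (iota 2 k)) x y = prism_edge x y.
Proof.
pose V : seq (nat * 'I_2) := [seq (i, r) | i <- iota 0 k.+2, r <- [:: ord0; ord_max]].
have inV z : z.1 < k.+2 -> z \in V.
  by move=> ?; rewrite mem_allpairs_pair mem_iota mem_ord2 andbT.
move=> le_k2 /inV xV /inV yV neq_xy; apply/eqP.
suff /allP/(_ x xV)/allP/(_ y yV) : all (fun x => all (fun y => (x != y) ==>
    (alternate (prism_word 0 1 (iota 2 k)) x y == prism_edge x y)) V) V.
  by rewrite neq_xy.
by case: k le_k2 {x y xV yV neq_xy inV} @V => [|[|[|]]] // _; vm_compute.
Qed.

Lemma alternate_prism_word_le2 (T : eqType) (a b : T) (m : seq T) (x y : T * 'I_2) :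
  uniq [:: a, b & m] -> size m <= 2 ->
  x.1 \in [:: a, b & m] -> y.1 \in [:: a, b & m] -> x != y ->
  alternate (prism_word a b m) x y = prism_edge x y.
Proof.
set s := [:: a, b & m] => uniq_s le_m2 xs ys neq_xy.
pose F (z : T * 'I_2) := (index z.1 s, z.2).
have inj_F : {in [:: x, y & prism_word a b m] &, injective F}.
  have fst_s z : z \in [:: x, y & prism_word a b m] -> z.1 \in s.
    by rewrite !inE mem_prism_word => /or3P[/eqP-> | /eqP-> | ].
  move=> [i r] [j r'] /fst_s /= si /fst_s /= sj eq_F.
  by rewrite (index_inj i si sj (congr1 fst eq_F)) (congr1 snd eq_F : r = r').
have [index_a index_b index_m] :
    [/\ index a s = 0, index b s = 1 & map (index^~ s) m = iota 2 (size m)].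
  by case: (map_index_iota uniq_s).
have F_word : map F (prism_word a b m) = prism_word 0 1 (iota 2 (size m)).
  by rewrite (map_prism_word (index^~ s)) index_a index_b index_m.
rewrite -(alternate_map inj_F) F_word alternate_prism_word_iota //; last 3 first.
- by rewrite -[(size m).+2]/(size s) index_mem.
- by rewrite -[(size m).+2]/(size s) index_mem.
- by rewrite (inj_in_eq inj_F) // !inE eqxx ?orbT.
by rewrite /prism_edge /= (inj_in_eq (@index_inj _ a s) xs ys).
Qed.

Lemma alternate_prism_word (T : eqType) (a b : T) (m : seq T) (x y : T * 'I_2) :
  uniq [:: a, b & m] -> x.1 \in [:: a, b & m] -> y.1 \in [:: a, b & m] -> x != y ->
  alternate (prism_word a b m) x y = prism_edge x y.
Proof.
move=> uniq_s xs ys neq_xy; have /and3P[a_bm b_m uniq_m] := uniq_s.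
have a_m : a \notin m by apply: contra a_bm; rewrite inE => ->; rewrite orbT.
pose P := [pred i | (i \notin m) || (i == x.1) || (i == y.1)].
rewrite -(@alternate_filter _ [pred z | P z.1]) ?inE ?eqxx ?orbT //.
rewrite filter_prism_word ?inE ?a_m ?b_m //.
apply: alternate_prism_word_le2 => //.
- by apply: subseq_uniq uniq_s; rewrite /= !eqxx filter_subseq.
- apply: (@uniq_leq_size _ _ [:: x.1; y.1]); first exact: filter_uniq.
  by move=> i; rewrite mem_filter !inE => /andP[]; case: (i \in m).
- by move: xs; rewrite !inE mem_filter !inE eqxx !orbT.
- by move: ys; rewrite !inE mem_filter !inE eqxx !orbT.
Qed.

Lemma prism_word_represents (T : finType) (a b : T) (m : seq T) :
  uniq [:: a, b & m] -> (forall i, i \in [:: a, b & m]) ->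
  represents (cartprod [rel i j : T | i != j] (@Kn 2)) (prism_word a b m).
Proof.
move=> uniq_s cover; split=> [z | x y neq_xy]; first by rewrite mem_prism_word.
by rewrite alternate_prism_word.
Qed.

Theorem mainTheorem5 (n : nat) (hn : 2 <= n) :
  exists w : seq ('I_n * 'I_2),
    represents (cartprod (@Kn n) (@Kn 2)) w /\ size w <= 5 * n - 4.
Proof.
case: n hn => [|[|n]] // _; have := size_enum_ord n.+2.
case E: (enum 'I_n.+2) => [|a [|b m]] // [size_m].
exists (prism_word a b m); split; last by rewrite size_prism_word size_m; lia.
by apply: prism_word_represents; rewrite -E ?enum_uniq // => i; rewrite mem_enum.
Qed.
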